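(* Let $\varphi\in\mathrm{THT}^{1}$ satisfy the almost-empty requirement. Then $\varphi$ has an equilibrium model if and only if the formula $\varphi\wedge\mathsf F\mathsf G\bigwedge_{p\in P}\neg p$ is LTL-satisfiable.
   Context: Fix a finite set $P$ of atomic propositions. THT formulas over $P$: $\varphi ::= p \mid \bot \mid \varphi\vee\varphi \mid \varphi\wedge\varphi \mid \varphi\rightarrow\varphi \mid \mathsf{X}\varphi \mid \varphi\,\mathsf{U}\,\varphi \mid \varphi\,\mathsf{R}\,\varphi$, with $\neg\varphi:=\varphi\rightarrow\bot$, $\top:=\neg\bot$, and $\mathsf F\varphi$, $\mathsf G\varphi$ meaning $\top\mathsf U\varphi$ and $\bot\mathsf R\varphi$. A THT interpretation is a pair $M=(H,T)$ of infinite words over $2^P$ with $H(i)\subseteq T(i)$ for all $i$; it is total if $H=T$. Satisfaction $M,i\models\varphi$ is defined by: - $M,i\not\models\bot$; - $M,i\models p$ iff $p\in H(i)$; - $\vee$ and $\wedge$ are interpreted as usual; - $M,i\models\varphi\rightarrow\psi$ iff for both $H'\in\{H,T\}$, either $(H',T),i\not\models\varphi$ or $(H',T),i\models\psi$; - temporal modalities have their usual LTL clauses evaluated in $M$. $M\models\varphi$ means $M,0\models\varphi$. An equilibrium model of $\varphi$ is a total $(T,T)\models\varphi$ with $(H,T)\not\models\varphi$ whenever $H(i)\subseteq T(i)$ for all $i$ and $H\ne T$. LTL-satisfiability refers to standard LTL semantics over infinite words over $2^P$ (classical implication). $\mathrm{THT}^1$ is the set of THT formulas (all temporal modalities allowed)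 with implication height at most $1$, i.e. no nesting of $\rightarrow$, where negation counts as an implication. A position $i$ is empty in $(H,T)$ if $H(i)=\emptyset$. A total interpretation is almost-empty if it has only finitely many non-empty positions. $\varphi$ satisfies the almost-empty requirement if every equilibrium model of $\varphi$ is almost-empty. *)

From mathcomp Require Import all_boot.
Set Implicit Arguments. Unset Strict Implicit. Unset Printing Implicit Defensive.

Section THT.
Variable P : finType.

Inductive formula : Type :=
| Atom of P
| Bot
| Or of formula & formula
| And of formula & formula
| Impl of formula & formula
| Next of formula
| Until of formula & formula
| Release of formula & formula.

Definition Neg (f : formula) := Impl f Bot.
Definition Top := Neg Bot.
Definition Fin (f : formula) := Until Top f.
Definition Glob (f : formula) := Release Bot f.

Definition trace := nat -> {set P}.

Fixpoint tht_sat (H T : trace) (i : nat) (f : formula) {struct f} : Prop :=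
  match f with
  | Atom p => p \in H i
  | Bot => False
  | Or a b => tht_sat H T i a \/ tht_sat H T i b
  | And a b => tht_sat H T i a /\ tht_sat H T i b
  | Impl a b => (tht_sat H T i a -> tht_sat H T i b) /\
                (tht_sat T T i a -> tht_sat T T i b)
  | Next a => tht_sat H T i.+1 a
  | Until a b => exists j, i <= j /\ tht_sat H T j b /\
                   (forall k, i <= k -> k < j -> tht_sat H T k a)
  | Release a b => forall j, i <= j -> tht_sat H T j b \/
                   (exists k, i <= k /\ k < j /\ tht_sat H T k a)
  end.

Fixpoint ltl_sat (T : trace) (i : nat) (f : formula) {struct f} : Prop :=
  match f with
  | Atom p => p \in T i
  | Bot => False
  | Or a b => ltl_sat T i a \/ ltl_sat T i b
  | And a b => ltl_sat T i a /\ ltl_sat T i b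
  | Impl a b => ltl_sat T i a -> ltl_sat T i b
  | Next a => ltl_sat T i.+1 a
  | Until a b => exists j, i <= j /\ ltl_sat T j b /\
                   (forall k, i <= k -> k < j -> ltl_sat T k a)
  | Release a b => forall j, i <= j -> ltl_sat T j b \/
                   (exists k, i <= k /\ k < j /\ ltl_sat T k a)
  end.

Definition LTL_satisfiable (f : formula) : Prop := exists T : trace, ltl_sat T 0 f.

(* implication height (negation = implication into Bot, so it counts) *)
Fixpoint imp_height (f : formula) : nat :=
  match f with
  | Atom _ | Bot => 0
  | Or a b | And a b | Until a b | Release a b => maxn (imp_height a) (imp_height b)
  | Impl a b => (maxn (imp_height a) (imp_height b)).+1
  | Next a => imp_height a
  end.

Definition in_THT1 (f : formula) : Prop := imp_height f <= 1.

Definition equilibrium_model (f : formula) (T : trace) : Prop :=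
  tht_sat T T 0 f /\
  forall H : trace, (forall i, H i \subset T i) -> H <> T -> ~ tht_sat H T 0 f.

Definition almost_empty (T : trace) : Prop :=
  exists n, forall i, n <= i -> T i = set0.

Definition almost_empty_requirement (f : formula) : Prop :=
  forall T, equilibrium_model f T -> almost_empty T.

Definition all_neg_atoms : formula :=
  foldr (fun p acc => And (Neg (Atom p)) acc) Top (enum P).

End THT.

From mathcomp Require Import all_boot.
From Stdlib Require Import Classical FunctionalExtensionality.

(* Total interpretations are classical, so equilibrium models of phi are the
   LTL models T of phi admitting no here-word H < T with (H,T) |= phi.  For a
   formula of implication height at most 1, (H,T) |= phi implies that H is an
   LTL model of phi, since every implication of phi has implication-free sides,
   whose THT truth depends on H alone.  Hence equilibrium models are exactly the
   subset-minimal LTL models.  An almost-empty LTL model lies above a minimal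
   one: shrinking it strictly decreases the total size of its finitely many
   non-empty positions. *)

Set Implicit Arguments.
Unset Strict Implicit.
Unset Printing Implicit Defensive.

Section Semantics.
Variable P : finType.
Implicit Types (f g : formula P) (H T : trace P).

Lemma tht_sat_total f T i : tht_sat T T i f <-> ltl_sat T i f.
Proof.
elim: f T i => [p||a IHa b IHb|a IHa b IHb|a IHa b IHb|a IHa|a IHa b IHb|a IHa b IHb]
  T i //=; rewrite ?IHa ?IHb //; first tauto.
- split=> -[j [le_ij [sat_b sat_a]]]; exists j; do !split=> //; try exact/IHb;
    by move=> k le_ik lt_kj; apply/IHa/sat_a.
- split=> sat j le_ij; case: (sat j le_ij) => [?|[k [? [? ?]]]];
    by [left; apply/IHb | right; exists k; do !split=> //; apply/IHa].
Qed.

Lemma tht_sat_impl_free f H T i :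
  imp_height f = 0 -> tht_sat H T i f <-> ltl_sat H i f.
Proof.
elim: f i => [p||a IHa b IHb|a IHa b IHb|a IHa b IHb|a IHa|a IHa b IHb|a IHa b IHb]
  i //=; try (move/eqP; rewrite -leqn0 geq_max !leqn0 => /andP[/eqP ha /eqP hb]).
- by rewrite IHa ?IHb.
- by rewrite IHa ?IHb.
- by move/IHa.
- split=> -[j [le_ij [sat_b sat_a]]]; exists j; do !split=> //; try exact/IHb;
    by move=> k le_ik lt_kj; apply/IHa/sat_a.
- split=> sat j le_ij; case: (sat j le_ij) => [?|[k [? [? ?]]]];
    by [left; apply/IHb | right; exists k; do !split=> //; apply/IHa].
Qed.

Lemma tht_sat_height1_here f H T i :
  imp_height f <= 1 -> tht_sat H T i f -> ltl_sat H i f.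
Proof.
elim: f i => [p||a IHa b IHb|a IHa b IHb|a IHa b IHb|a IHa|a IHa b IHb|a IHa b IHb]
  i //=; rewrite ?geq_max.
- by case/andP=> ha hb [sat_a|sat_b]; [left; apply: IHa sat_a|right; apply: IHb sat_b].
- by case/andP=> ha hb [sat_a sat_b]; split; [apply: IHa sat_a|apply: IHb sat_b].
- rewrite ltnS geq_max !leqn0 => /andP[/eqP ha /eqP hb] [here _].
  by move=> /(tht_sat_impl_free _ T _ ha)/here/(tht_sat_impl_free _ _ _ hb).
- exact: IHa.
- case/andP=> ha hb [j [le_ij [sat_b sat_a]]]; exists j; split=> //.
  split; first exact: IHb sat_b.
  by move=> k le_ik lt_kj; apply: IHa (sat_a k le_ik lt_kj).
- case/andP=> ha hb sat j le_ij; case: (sat j le_ij) => [sat_b|[k [? [? sat_a]]]].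
    by left; apply: IHb sat_b.
  by right; exists k; do !split=> //; apply: IHa sat_a.
Qed.

Lemma ltl_sat_Fin T i g : ltl_sat T i (Fin g) <-> exists2 j, i <= j & ltl_sat T j g.
Proof.
split=> [[j [le_ij [sat _]]]|[j le_ij sat]]; exists j => //.
by split=> //; split=> // k _ _ /=.
Qed.

Lemma ltl_sat_Glob T i g : ltl_sat T i (Glob g) <-> forall j, i <= j -> ltl_sat T j g.
Proof.
split=> sat j le_ij; last by left; apply: sat.
by case: (sat j le_ij) => [|[k [_ [_ []]]]].
Qed.

Lemma ltl_sat_neg_atoms T i s :
  ltl_sat T i (foldr (fun p acc => And (Neg (Atom p)) acc) (Top P) s) <->
  {in s, forall p, p \notin T i}.
Proof.
elim: s => [|q s IH] /=; first by split=> // _ _.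
rewrite IH; split=> [[not_q not_s] p|not_qs].
  by rewrite inE => /predU1P[->|/not_s //]; apply/negP.
split; last by move=> p s_p; apply: not_qs; rewrite inE s_p orbT.
by move=> q_T; move: (not_qs q (mem_head q s)); rewrite q_T.
Qed.

Lemma ltl_sat_all_neg_atoms T i : ltl_sat T i (all_neg_atoms P) <-> T i = set0.
Proof.
rewrite ltl_sat_neg_atoms; split=> [not_T|->]; last by move=> p _; rewrite inE.
by apply/setP=> p; rewrite inE; apply/negbTE/not_T; rewrite mem_enum.
Qed.

Lemma ltl_sat_FG_all_neg_atoms T :
  ltl_sat T 0 (Fin (Glob (all_neg_atoms P))) <-> almost_empty T.
Proof.
rewrite ltl_sat_Fin; split=> [[n _ /ltl_sat_Glob empty]|[n empty]]; exists n => //.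
  by move=> i le_ni; apply/ltl_sat_all_neg_atoms/empty.
by apply/ltl_sat_Glob=> i le_ni; apply/ltl_sat_all_neg_atoms/empty.
Qed.

End Semantics.

Section MinimalModel.
Variable P : finType.
Implicit Types H T : trace P.

Definition subtrace H T := forall i, H i \subset T i.

Definition weight n H := \sum_(i < n) #|H i|.

Lemma subtrace_trans H1 H2 H3 : subtrace H1 H2 -> subtrace H2 H3 -> subtrace H1 H3.
Proof. by move=> sub12 sub23 i; apply: subset_trans (sub12 i) (sub23 i). Qed.

Lemma weight_proper n H T :
  (forall i, n <= i -> T i = set0) -> subtrace H T -> H <> T -> weight n H < weight n T.
Proof.
move=> empty sub neq; have [eq_n|/forallPn[i neq_i]] := boolP [forall i : 'I_n, H i == T i].
  case: neq; apply: functional_extensionality => i.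
  have [lt_in|le_ni] := ltnP i n; first exact/eqP/(forallP eq_n (Ordinal lt_in)).
  by move: (sub i); rewrite empty // subset0 => /eqP->.
rewrite /weight (bigD1 i) //= [X in _ < X](bigD1 i) //= -addSn.
apply: leq_add; last by apply: leq_sum => j _; apply: subset_leq_card.
by apply: proper_card; rewrite properEneq neq_i sub.
Qed.

Lemma exists_minimal_subtrace (Q : trace P -> Prop) T :
  almost_empty T -> Q T ->
  exists2 H, subtrace H T & Q H /\ forall H', subtrace H' H -> H' <> H -> ~ Q H'.
Proof.
case=> n empty QT.
suff: forall m H, weight n H = m -> subtrace H T -> Q H -> exists2 H0, subtrace H0 T &
    Q H0 /\ forall H', subtrace H' H0 -> H' <> H0 -> ~ Q H'.
  by apply=> // i; apply: subxx.
elim/ltn_ind=> m IH H weight_H sub QH.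
have [[H' [sub' neq' QH']]|minimal] :=
  classic (exists H', [/\ subtrace H' H, H' <> H & Q H']); last first.
  by exists H => //; split=> // H' sub' neq' QH'; apply: minimal; exists H'.
apply: (IH (weight n H')) (subtrace_trans sub' sub) QH' => //.
rewrite -weight_H; apply: weight_proper sub' neq' => i le_ni.
by move: (sub i); rewrite empty // subset0 => /eqP.
Qed.

End MinimalModel.

Theorem mainTheorem12 (P : finType) (phi : formula P) :
  in_THT1 phi -> almost_empty_requirement phi ->
  ((exists T : trace P, equilibrium_model phi T) <->
   LTL_satisfiable (And phi (Fin (Glob (all_neg_atoms P))))).
Proof.
move=> THT1_phi almost_empty_phi; split.
  move=> [T eqm]; exists T; split; first by apply/tht_sat_total; case: eqm.
  by apply/ltl_sat_FG_all_neg_atoms; apply: almost_empty_phi.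
move=> [T [sat_phi /ltl_sat_FG_all_neg_atoms almost_empty_T]].
have [H _ [sat_H minimal]] :=
  exists_minimal_subtrace (Q := fun H => ltl_sat H 0 phi) almost_empty_T sat_phi.
exists H; split; first exact/tht_sat_total.
by move=> H' sub neq /(tht_sat_height1_here THT1_phi); apply: minimal.
Qed.
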